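(* Assume $(\boldsymbol\lambda,\boldsymbol\mu)$ satisfies (H) (notation as there) and that there exists a good sequence $v_{\omega.\mu}=v_{\mathbf k_0}\overset{\bullet}{\to}\cdots\overset{\bullet}{\to}v_{\mathbf k_e}\overset{t}{\to}v_{\mathbf k_{e+1}}\overset{\bullet}{\to}\cdots\overset{\bullet}{\to}v_{\mathbf k_N}=v_\lambda$ with respect to $(\lambda,\mu)$, where $t\in\{2,3,4\}$ is the index of the rule used at the unique step with $m=1$. Then this good sequence is unique, $t$ is uniquely determined, $(\gamma,\delta)\neq(0,0)$, and $h\equiv\eta\pmod{nl}$ for some $\eta\in\{0,\gamma,\delta,\gamma+\delta\}$.
   Context: Fix $n,l,m\ge1$, $\mathbf s_l=(s_1,\dots,s_l)\in\mathbb Z^l$, $s=\sum s_b$. Each $k\in\mathbb Z$ is uniquely $k=c(k)+n(d(k)-1)+nl\,m(k)$, $c(k)\in\{1..n\}$, $d(k)\in\{1..l\}$; $\phi(k)=c(k)+n\,m(k)$. $\Pi^l_m$ = $l$-tuples of partitions of total size $m$; $\boldsymbol\lambda\leftrightarrow\lambda$ iff $\{(\lambda^{(b)}_i+s_b+1-i,b)\}=\{(\phi(k),d(k)):k\in\{\lambda_i+s+1-i:i\ge1\}\}$; $\boldsymbol\lambda\prec\boldsymbol\mu$ iff $\lambda\lhd\mu$ (strict dominance). For $|\lambda|=r$, $\boldsymbol\beta(\lambda)=(\lambda_i+s+1-i)_{i\le r}$, $B(\lambda)$ its set. (H): $\boldsymbol\lambda,\boldsymbol\mu\in\Pi^l_m$,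 $\boldsymbol\lambda\leftrightarrow\lambda$, $\boldsymbol\mu\leftrightarrow\mu$, $\boldsymbol\lambda\prec\boldsymbol\mu$, $|\lambda|=|\mu|=r$, $\#(B(\lambda)\cap B(\mu))=r-2$. Under (H): $\boldsymbol\beta(\mu)=(\beta_i)$; $\lambda/(\lambda\cap\mu)$, $\mu/(\lambda\cap\mu)$ are ribbons of a common length $h$; $x$ is the row of the head of $\lambda/(\lambda\cap\mu)$, $y$ the row of the tail of $\mu/(\lambda\cap\mu)$; $B(\lambda)=(B(\mu)\setminus\{\beta_x,\beta_y\})\cup\{\beta_x+h,\beta_y-h\}$; $\gamma,\delta\in\{0..nl-1\}$ are the residues mod $nl$ of $c(\beta_y)-c(\beta_x)$ and $n(d(\beta_y)-d(\beta_x))$. Wedge space (Uglov): $\mathbb C(q)$-span of $v_{k_1}\wedge v_{k_2}\wedge\cdots$ ($k_i=s+1-i$ for $i\gg0$) with basis the ordered symbols; an adjacent pair $v_{k_1}\wedge v_{k_2}$, $k_1\le k_2$, is straightened by (with $\gamma',\delta'$ the residues mod $nl$ of $c(k_2)-c(k_1)$, $n(d(k_2)-d(k_1))$; sums over $i$ giving ordered two-factor wedges): (R1) $\gamma'=\delta'=0$: $v_{k_1}\wedge v_{k_2}=-v_{k_2}\wedge v_{k_1}$. (R2) $\gamma'>0,\delta'=0$: $=-q^{-1}v_{k_2}\wedge v_{k_1}-(q^{-2}-1)\sum_{i\ge1}q^{-2i+1}v_{k_2-nli}\wedge v_{k_1+nli}+(q^{-2}-1)\sum_{i\ge0}q^{-2i}v_{k_2-\gamma'-nli}\wedge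 v_{k_1+\gamma'+nli}$. (R3) $\gamma'=0,\delta'>0$: $=-qv_{k_2}\wedge v_{k_1}-(q^2-1)\sum_{i\ge1}q^{2i-1}v_{k_2-nli}\wedge v_{k_1+nli}+(q^2-1)\sum_{i\ge0}q^{2i}v_{k_2-\delta'-nli}\wedge v_{k_1+\delta'+nli}$. (R4) $\gamma',\delta'>0$: $=-v_{k_2}\wedge v_{k_1}-(q-q^{-1})\sum_{i\ge1}\frac{q^{2i}-q^{-2i}}{q+q^{-1}}v_{k_2-nli}\wedge v_{k_1+nli}-(q-q^{-1})\sum_{i\ge0}\frac{q^{2i+1}+q^{-2i-1}}{q+q^{-1}}v_{k_2-\gamma'-nli}\wedge v_{k_1+\gamma'+nli}+(q-q^{-1})\sum_{i\ge0}\frac{q^{2i+1}+q^{-2i-1}}{q+q^{-1}}v_{k_2-\delta'-nli}\wedge v_{k_1+\delta'+nli}+(q-q^{-1})\sum_{i\ge0}\frac{q^{2i+2}-q^{-2i-2}}{q+q^{-1}}v_{k_2-\gamma'-\delta'-nli}\wedge v_{k_1+\gamma'+\delta'+nli}$. Sequences: wedges $v_{\mathbf k}$ with first $r$ indices $\mathbf k$ and fixed tail $s-r,s-r-1,\dots$; $\sigma.(k_1,\dots,k_r)=(k_{\sigma^{-1}(1)},\dots)$; $\omega$ longest element; $v_\lambda=v_{\boldsymbol\beta(\lambda)}$, $v_{\omega.\mu}=v_{\omega.\boldsymbol\beta(\mu)}$. $v_{\mathbf k}\to v_{\mathbf l}$ if there is $i$ with $k_i\le k_{i+1}$, $k_j>k_{j+1}$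 for $j<i$, $k_j=l_j$ for $j\notin\{i,i+1\}$, and $v_{l_i}\wedge v_{l_{i+1}}$ has nonzero coefficient in the straightening of $v_{k_i}\wedge v_{k_{i+1}}$ by the applicable rule $(R_t)$; written $\overset{\bullet}{\to}$ (with $m=0$) if $(l_i,l_{i+1})=(k_{i+1},k_i)$, else $\overset{t}{\to}$ (with $m=1$). A good sequence for $(\lambda,\mu)$ is a chain $v_{\omega.\mu}\to\cdots\to v_\lambda$ with total $m$ equal to $1$. *)

From mathcomp Require Import all_boot all_algebra.
Set Implicit Arguments. Unset Strict Implicit. Unset Printing Implicit Defensive.
Import GRing.Theory Num.Theory.
Local Open Scope ring_scope.

(* k = c(k) + n(d(k)-1) + nl m(k), c in 1..n, d in 1..l *)
Definition cc (n : nat) (k : int) : int := ((k - 1) %% n%:Z)%Z + 1.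
Definition dd (n l : nat) (k : int) : int := ((((k - 1) %/ n%:Z)%Z) %% l%:Z)%Z + 1.
Definition mm (n l : nat) (k : int) : int := ((k - 1) %/ (n * l)%N%:Z)%Z.
Definition phi (n l : nat) (k : int) : int := cc n k + n%:Z * mm n l k.

(* i-th part (1-indexed) of a partition, 0 beyond its length *)
Definition part (lam : seq nat) (i : nat) : nat := nth 0%N lam i.-1.
Definition is_partition (lam : seq nat) : bool :=
  sorted geq lam && all (fun x => 0 < x)%N lam.
Definition is_multipartition (l m : nat) (mp : seq (seq nat)) : bool :=
  [&& size mp == l, all is_partition mp & sumn (map sumn mp) == m].
Definition charge_sum (sl : seq int) : int := \sum_(x <- sl) x.

Definition corr (n l : nat) (sl : seq int) (mp : seq (seq nat)) (lam : seq nat) : Prop :=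
  forall (x : int) (b : nat),
    ((1 <= b <= l)%N /\ exists2 i, (1 <= i)%N &
        x = (part (nth [::] mp b.-1) i)%:Z + nth 0 sl b.-1 + 1 - i%:Z)
    <-> (exists2 i, (1 <= i)%N &
        let k := (part lam i)%:Z + charge_sum sl + 1 - i%:Z in phi n l k = x /\ dd n l k = b%:Z).

Definition dom (lam mu : seq nat) : Prop := forall k, (sumn (take k lam) <= sumn (take k mu))%N.
Definition sdom (lam mu : seq nat) : Prop := dom lam mu /\ lam <> mu.

Definition beta (s : int) (lam : seq nat) (r : nat) : seq int :=
  [seq (part lam i)%:Z + s + 1 - i%:Z | i <- iota 1 r].

Definition pmeet (lam mu : seq nat) : seq nat := [seq minn p.1 p.2 | p <- zip lam mu].

Definition gamp (n l : nat) (k1 k2 : int) : int := ((cc n k2 - cc n k1) %% (n * l)%N%:Z)%Z.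
Definition delp (n l : nat) (k1 k2 : int) : int :=
  ((n%:Z * (dd n l k2 - dd n l k1)) %% (n * l)%N%:Z)%Z.
Definition rule (n l : nat) (k1 k2 : int) : nat :=
  if gamp n l k1 k2 == 0 then (if delp n l k1 k2 == 0 then 1%N else 3%N)
  else (if delp n l k1 k2 == 0 then 2%N else 4%N).
(* the "shifts" g + nl i occurring in the sums of the applicable rule *)
Definition rule_gens (n l : nat) (k1 k2 : int) : seq int :=
  let g := gamp n l k1 k2 in let d := delp n l k1 k2 in
  match rule n l k1 k2 with
  | 1%N => [::] | 2%N => [:: g] | 3%N => [:: d] | _ => [:: g; d; g + d] end.
Definition shift_ok (n l : nat) (k1 k2 e : int) : Prop :=
  e = 0 \/
  (rule n l k1 k2 <> 1%N /\
   ((exists2 i : nat, (1 <= i)%N & e = (n * l)%N%:Z * i%:Z) \/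
    (exists2 g, g \in rule_gens n l k1 k2 & exists i : nat, e = g + (n * l)%N%:Z * i%:Z))).
(* v_a /\ v_b (ordered, a > b) has nonzero coefficient in straightening v_k1 /\ v_k2 *)
Definition term (n l : nat) (k1 k2 a b : int) : Prop :=
  b < a /\ exists e, [/\ shift_ok n l k1 k2 e, a = k2 - e & b = k1 + e].

(* v_kk -> v_ll ; lab = None for a bullet step, Some t for a step of type t *)
Definition step (n l : nat) (kk ll : seq int) (lab : option nat) : Prop :=
  size ll = size kk /\
  exists i : nat, (i.+1 < size kk)%N /\ [/\
    nth 0 kk i <= nth 0 kk i.+1,
    (forall j, (j < i)%N -> nth 0 kk j.+1 < nth 0 kk j),
    (forall j, j != i -> j != i.+1 -> nth 0 ll j = nth 0 kk j),
    term n l (nth 0 kk i) (nth 0 kk i.+1) (nth 0 ll i) (nth 0 ll i.+1) &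
    lab = (if (nth 0 ll i == nth 0 kk i.+1) && (nth 0 ll i.+1 == nth 0 kk i) then None
           else Some (rule n l (nth 0 kk i) (nth 0 kk i.+1)))].

Definition good (n l : nat) (s : int) (lam mu : seq nat) (r : nat)
    (ks : seq (seq int)) (labs : seq (option nat)) : Prop :=
  [/\ size ks = (size labs).+1,
      nth [::] ks 0 = rev (beta s mu r),
      nth [::] ks (size labs) = beta s lam r,
      (forall j, (j < size labs)%N -> step n l (nth [::] ks j) (nth [::] ks j.+1) (nth None labs j)) &
      count isSome labs = 1%N].

From mathcomp Require Import all_boot all_algebra zify.
Import GRing.Theory Num.Theory.
Local Open Scope ring_scope.
Set Implicit Arguments. Unset Strict Implicit.

(* Bullet steps swap the two entries at the first ascent: they are deterministic,
   preserve the multiset of entries and never undo an inversion. Along a good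
   sequence the entries thus form a permutation of beta(mu) before the labelled step
   and of beta(lam) after it; as beta(lam) and beta(mu) share r - 2 entries, the
   labelled step replaces the two entries u < v of beta(mu) \ beta(lam), standing at
   the first ascent, by the two entries of beta(lam) \ beta(mu). Its position is
   forced, since performing it later would require undoing the inversion of u and v
   created by a bullet step, and all other steps are deterministic: hence uniqueness.
   The labelled step replaces (u, v) by (v - eps, u + eps) with eps <> 0 a shift of a
   rule other than (R1), so eps is congruent mod nl to 0, g', d' or g' + d', where (g', d') is
   congruent to +(gam, del) or -(gam, del) according as (u, v) = (bx, by) or (by, bx).
   With by - bx = gam + del mod nl and v - eps in {bx + h, by - h}, h is congruent
   to eps or to gam + del -+ eps, and {0, gam, del, gam + del} is stable under
   eta |-> gam + del - eta mod nl. *)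

Section SetPair.
Variables (T : eqType) (x0 : T).

Definition set_pair (s : seq T) (i : nat) (a b : T) : seq T :=
  take i s ++ a :: b :: drop i.+2 s.

Lemma size_set_pair s i a b : (i.+1 < size s)%N -> size (set_pair s i a b) = size s.
Proof. by move=> lt_i; rewrite size_cat /= size_takel ?size_drop; lia. Qed.

Lemma nth_set_pair s i a b j : (i.+1 < size s)%N ->
  nth x0 (set_pair s i a b) j = if j == i then a else if j == i.+1 then b else nth x0 s j.
Proof.
move=> lt_i; rewrite nth_cat size_takel; last lia.
case: (ltngtP j i) => [lt_ji|lt_ij|->]; last by rewrite subnn.
  by rewrite nth_take // ifN_eq //; lia.
have [k ->] : exists k, j = (i + k.+1)%N by exists (j - i).-1; lia.
rewrite addKn; case: k => [|k] /=; first by rewrite addn1 eqxx.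
by rewrite nth_drop ifN_eq; [congr nth | ]; lia.
Qed.

Lemma set_pairK s i : (i.+1 < size s)%N -> set_pair s i (nth x0 s i) (nth x0 s i.+1) = s.
Proof.
move=> lt_i; apply: (@eq_from_nth _ x0); first by rewrite size_set_pair.
by move=> j _; rewrite nth_set_pair //; do 2![case: eqP => [->|_] //].
Qed.

Lemma perm_set_pair s i a b :
  perm_eq (set_pair s i a b) (a :: b :: take i s ++ drop i.+2 s).
Proof. by rewrite /set_pair -[a :: b :: _]/([:: a; b] ++ _) perm_catCA. Qed.

End SetPair.

Definition first_ascent (kk : seq int) (i : nat) : Prop :=
  [/\ (i.+1 < size kk)%N, kk`_i <= kk`_i.+1 & forall j, (j < i)%N -> kk`_j.+1 < kk`_j].

Lemma first_ascent_uniq kk i j : first_ascent kk i -> first_ascent kk j -> i = j.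
Proof.
move=> [_ asc_i desc_i] [_ asc_j desc_j].
by case: (ltngtP i j) => // [/desc_j | /desc_i]; lia.
Qed.

Lemma first_ascent_lt (kk : seq int) i : uniq kk -> first_ascent kk i -> kk`_i < kk`_i.+1.
Proof.
move=> uniq_kk [lt_i le_i _].
have : kk`_i != kk`_i.+1 by rewrite nth_uniq // ?(ltnW lt_i) // (ltn_eqF (ltnSn i)).
by move: le_i; lia.
Qed.

Section Steps.
Variables n l : nat.

Definition bullet_step (kk ll : seq int) : Prop := step n l kk ll None.

Lemma stepP kk ll lab : step n l kk ll lab -> exists i, [/\ first_ascent kk i,
  ll = set_pair kk i ll`_i ll`_i.+1, term n l kk`_i kk`_i.+1 ll`_i ll`_i.+1 &
  lab = if (ll`_i == kk`_i.+1) && (ll`_i.+1 == kk`_i) then None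
        else Some (rule n l kk`_i kk`_i.+1)].
Proof.
move=> [size_ll [i [lt_i [asc desc same t ->]]]]; exists i; split => //.
apply: (@eq_from_nth _ 0); first by rewrite size_set_pair // size_ll.
move=> j _; rewrite nth_set_pair //.
by case: eqP => [->|/eqP ne_i] //; case: eqP => [->|/eqP ne_i1] //; rewrite same.
Qed.

Lemma bullet_stepP kk ll : bullet_step kk ll ->
  exists2 i, first_ascent kk i & ll = set_pair kk i kk`_i.+1 kk`_i.
Proof.
case/stepP=> i [asc def_ll _]; case: ifP => // /andP [/eqP ll_i /eqP ll_i1] _.
by exists i; rewrite // {1}def_ll ll_i ll_i1.
Qed.

Lemma bullet_step_det kk ll ll' : bullet_step kk ll -> bullet_step kk ll' -> ll = ll'.
Proof.
case/bullet_stepP=> i asc_i -> /bullet_stepP [j asc_j ->].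
by rewrite (first_ascent_uniq asc_i asc_j).
Qed.

Lemma step_label_det kk ll lab lab' : step n l kk ll lab -> step n l kk ll lab' -> lab = lab'.
Proof.
case/stepP=> i [asc_i _ _ ->] /stepP [j [asc_j _ _ ->]].
by rewrite (first_ascent_uniq asc_i asc_j).
Qed.

Lemma perm_bullet_step kk ll : bullet_step kk ll -> perm_eq ll kk.
Proof.
case/bullet_stepP=> i [lt_i _ _] ->.
rewrite -[in X in perm_eq _ X](set_pairK 0 lt_i).
apply: perm_trans (perm_set_pair _ _ _ _) _; rewrite perm_sym.
apply: perm_trans (perm_set_pair _ _ _ _) _.
by rewrite -[_ :: _ :: _]/([:: _] ++ [:: _] ++ _) perm_catCA.
Qed.

Lemma index_bullet_step (kk ll : seq int) (i : nat) (x : int) :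
  uniq kk -> bullet_step kk ll -> first_ascent kk i ->
  index x ll = if index x kk == i then i.+1 else if index x kk == i.+1 then i else index x kk.
Proof.
move=> uniq_kk step_kk asc_i; have perm_ll := perm_bullet_step step_kk.
have uniq_ll : uniq ll by rewrite (perm_uniq perm_ll).
have size_ll : size ll = size kk by rewrite (perm_size perm_ll).
case/bullet_stepP: step_kk => i' asc_i'; rewrite -(first_ascent_uniq asc_i asc_i') => def_ll.
case: asc_i => lt_i _ _; case kk_x: (x \in kk); last first.
  by rewrite !memNindex ?(perm_mem perm_ll) ?kk_x // size_ll (gtn_eqF lt_i) (gtn_eqF (ltnW lt_i)).
rewrite -[in LHS](nth_index 0 kk_x); have := index_mem x kk; rewrite kk_x.
move: (index x kk) => j lt_j.
have lt_ll : forall k, (k < size kk)%N -> (k < size ll)%N by rewrite size_ll.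
case: (eqVneq j i) => [->|ne_i].
  have -> : kk`_i = ll`_i.+1 by rewrite def_ll nth_set_pair // eqxx (gtn_eqF (ltnSn i)).
  by rewrite index_uniq ?lt_ll ?eqxx.
case: (eqVneq j i.+1) => [->|ne_i1].
  have -> : kk`_i.+1 = ll`_i by rewrite def_ll nth_set_pair // eqxx.
  by rewrite index_uniq ?lt_ll ?(ltnW lt_i) // (gtn_eqF (ltnSn i)) eqxx.
have -> : kk`_j = ll`_j by rewrite def_ll nth_set_pair // (negbTE ne_i) (negbTE ne_i1).
by rewrite index_uniq ?lt_ll // (negbTE ne_i) (negbTE ne_i1).
Qed.

Lemma bullet_step_keeps_inversion (kk ll : seq int) (u v : int) :
  uniq kk -> bullet_step kk ll -> u < v ->
  (index v kk < index u kk)%N -> (index v ll < index u ll)%N.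
Proof.
move=> uniq_kk step_kk lt_uv; have [i asc_i _] := bullet_stepP step_kk.
rewrite !(index_bullet_step _ uniq_kk step_kk asc_i); case: asc_i => lt_i le_i _.
have not_ascent : ~ (index v kk = i /\ index u kk = i.+1).
  move=> [iv iu]; have kk_v : v \in kk by rewrite -index_mem iv ltnW.
  have kk_u : u \in kk by rewrite -index_mem iu.
  by move: le_i; rewrite -{1}iv -iu !nth_index //; lia.
move: (index v kk) (index u kk) not_ascent => a b not_ascent.
by case: (eqVneq a i) => ?; case: (eqVneq a i.+1) => ?;
   case: (eqVneq b i) => ?; case: (eqVneq b i.+1) => ? /=; lia.
Qed.
End Steps.

Section Beta.
Variables (s : int) (lam : seq nat) (r : nat).
Hypothesis lam_part : is_partition lam.

Lemma size_beta : size (beta s lam r) = r.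
Proof. by rewrite size_map size_iota. Qed.

Lemma nth_beta i : (i < r)%N -> (beta s lam r)`_i = (part lam i.+1)%:Z + s + 1 - i.+1%:Z.
Proof. by move=> lt_i; rewrite (nth_map 0%N) ?size_iota // nth_iota // add1n. Qed.

Lemma part_nonincr i j : (1 <= i <= j)%N -> (part lam j <= part lam i)%N.
Proof.
case/andP: lam_part => sorted_lam _ /andP [i_gt0 le_ij].
case: (ltnP j.-1 (size lam)) => [lt_j|ge_j]; last by rewrite /part nth_default.
apply: (sorted_leq_nth (fun _ _ _ h1 h2 => leq_trans h2 h1) leqnn) => //; rewrite ?inE; lia.
Qed.

Lemma beta_decr i j : (i < j < r)%N -> (beta s lam r)`_j < (beta s lam r)`_i.
Proof.
move=> /andP [lt_ij lt_j]; rewrite !nth_beta //; last lia.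
have : (part lam j.+1 <= part lam i.+1)%N by apply: part_nonincr; lia.
lia.
Qed.

Lemma beta_uniq : uniq (beta s lam r).
Proof.
apply: (@sorted_uniq _ (fun a b : int => b < a)) => [a b c /=|a /=|]; try lia.
by apply/(sortedP 0) => i; rewrite size_beta => lt_i; apply: beta_decr; rewrite ltnSn.
Qed.

Lemma beta_no_step n l ll lab : ~ step n l (beta s lam r) ll lab.
Proof.
case/stepP=> i [[lt_i le_i _] _ _ _]; rewrite size_beta in lt_i.
by have := @beta_decr i i.+1; rewrite ltnSn lt_i => /(_ isT); lia.
Qed.

End Beta.

Section BulletChains.
Variables (n l : nat).

Definition bullet_chain (K : nat -> seq int) (j0 j1 : nat) : Prop :=
  forall j, (j0 <= j < j1)%N -> bullet_step n l (K j) (K j.+1).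

Lemma bullet_chain_perm K j0 j1 j : bullet_chain K j0 j1 -> (j0 <= j <= j1)%N ->
  perm_eq (K j) (K j0).
Proof.
move=> chain /andP [le_j0 le_j1]; rewrite -(subnKC le_j0) in le_j1 *.
elim: (j - j0)%N le_j1 => [|d IH] le_d; first by rewrite addn0.
rewrite addnS; apply: perm_trans (IH _); last lia.
by apply/perm_bullet_step/chain; lia.
Qed.

Lemma bullet_chain_det K1 K2 j0 j1 j2 j : K1 j0 = K2 j0 ->
  bullet_chain K1 j0 j1 -> bullet_chain K2 j0 j2 ->
  (j0 <= j)%N -> (j <= j1)%N -> (j <= j2)%N -> K1 j = K2 j.
Proof.
move=> eq_j0 chain1 chain2 le_j0; rewrite -(subnKC le_j0).
elim: (j - j0)%N => [|d IH] le_d1 le_d2; first by rewrite addn0.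
rewrite addnS; apply: (@bullet_step_det n l (K1 (j0 + d)%N)); first by apply: chain1; lia.
by rewrite IH; [apply: chain2|..]; lia.
Qed.

Lemma bullet_chain_keeps_inversion K j0 j1 j (u v : int) :
  uniq (K j0) -> bullet_chain K j0 j1 -> u < v ->
  (index v (K j0) < index u (K j0))%N -> (j0 <= j <= j1)%N ->
  (index v (K j) < index u (K j))%N.
Proof.
move=> uniq_j0 chain lt_uv inv_j0 /andP [le_j0 le_j1]; rewrite -(subnKC le_j0) in le_j1 *.
elim: (j - j0)%N le_j1 => [|d IH] le_d; first by rewrite addn0.
rewrite addnS; apply: (bullet_step_keeps_inversion _ _ lt_uv); last by apply: IH; lia.
  by rewrite (perm_uniq (@bullet_chain_perm K j0 j1 _ chain _)) //; lia.
by apply: chain; lia.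
Qed.

Lemma bullet_chain_sub K j0 j1 j0' j1' : bullet_chain K j0 j1 ->
  (j0 <= j0')%N -> (j1' <= j1)%N -> bullet_chain K j0' j1'.
Proof. by move=> chain le0 le1 j /andP [? ?]; apply: chain; lia. Qed.

Definition terminal (kk : seq int) : Prop := forall ll lab, ~ step n l kk ll lab.

Lemma bullet_chain_terminal_det K1 K2 j0 j1 j2 : K1 j0 = K2 j0 ->
  bullet_chain K1 j0 j1 -> bullet_chain K2 j0 j2 -> (j0 <= j1)%N -> (j0 <= j2)%N ->
  terminal (K1 j1) -> terminal (K2 j2) -> j1 = j2.
Proof.
have early_end K K' j j' : K j0 = K' j0 -> bullet_chain K j0 j -> bullet_chain K' j0 j' ->
    (j0 <= j)%N -> terminal (K j) -> ~ (j < j')%N.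
  move=> eq_j0 chain chain' le_j term_j lt_j; apply: (term_j (K' j.+1) None).
  by rewrite (bullet_chain_det eq_j0 chain chain') //; [apply: chain'|]; lia.
move=> eq_j0 chain1 chain2 le_j1 le_j2 term1 term2.
case: (ltngtP j1 j2) => // lt_j.
  by case: (early_end _ _ _ _ eq_j0 chain1 chain2 le_j1 term1).
by case: (early_end _ _ _ _ (esym eq_j0) chain2 chain1 le_j2 term2).
Qed.

End BulletChains.

Section Exchange.
Variable T : eqType.

Definition exchanged (X Y : seq T) (u v : T) : Prop :=
  [/\ u \in X, v \in X, u \notin Y, v \notin Y &
      forall w, w \in X -> w \notin Y -> w = u \/ w = v].

Lemma perm_exchanged (X Y rest : seq T) u v a b :
  uniq X -> perm_eq X [:: u, v & rest] -> perm_eq Y [:: a, b & rest] ->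
  count (mem X) Y = (size X - 2)%N -> exchanged X Y u v /\ exchanged Y X a b.
Proof.
move=> uniq_X perm_X perm_Y count_Y.
have memX w : (w \in X) = (w \in [:: u, v & rest]) by rewrite (perm_mem perm_X).
have memY w : (w \in Y) = (w \in [:: a, b & rest]) by rewrite (perm_mem perm_Y).
move: (uniq_X); rewrite (perm_uniq perm_X) /= inE => /and3P [/norP [_ u_rest] v_rest _].
have [aX bX] : a \notin X /\ b \notin X.
  have rest_X : count (mem X) rest = size rest.
    by apply/eqP; rewrite -all_count; apply/allP => w w_rest; rewrite /= memX !inE w_rest !orbT.
  move: count_Y; rewrite (permP perm_Y) /= rest_X (perm_size perm_X) /= subn2 /=.
  by case: (a \in X); case: (b \in X) => /=; lia.
have notY w : w \in [:: u, v & rest] -> w \notin rest -> w \notin Y.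
  move=> wX w_rest; rewrite memY !inE (negbTE w_rest) orbF.
  by apply/norP; split; [apply: contraNneq aX | apply: contraNneq bX] => <-; rewrite memX.
have uY : u \notin Y by apply: notY; rewrite ?inE ?eqxx.
have vY : v \notin Y by apply: notY; rewrite ?inE ?eqxx ?orbT.
have only_pair x y x' y' w :
    w \in [:: x, y & rest] -> w \notin [:: x', y' & rest] -> w = x \/ w = y.
  by rewrite !inE => /or3P [/eqP|/eqP|->] //; [left|right|rewrite !orbT].
split; split => //; rewrite ?memX ?memY ?inE ?eqxx ?orbT // => w;
  by rewrite memX memY; exact: only_pair.
Qed.

End Exchange.

Lemma exchanged_uniq (X Y : seq int) (u v u' v' : int) :
  exchanged X Y u v -> exchanged X Y u' v' -> u < v -> u' < v' -> u' = u /\ v' = v.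
Proof.
move=> [_ _ _ _ only] [u'X v'X u'Y v'Y _] lt_uv lt_uv'.
by case: (only _ u'X u'Y) => ?; case: (only _ v'X v'Y) => ?; lia.
Qed.

Definition only_some_at (A : Type) (s : seq (option A)) (e : nat) : Prop :=
  [/\ (e < size s)%N, isSome (nth None s e) & forall j, j != e -> nth None s j = None].

Lemma count_isSome_eq1 (A : Type) (s : seq (option A)) :
  count isSome s = 1%N -> exists e, only_some_at s e.
Proof.
elim: s => [|[x|] s IH] //= count_s.
  have none_s : ~~ has isSome s by rewrite has_count; lia.
  exists 0%N; split => // -[|j] //= _.
  case: (ltnP j (size s)) => [lt_j|?]; last by rewrite nth_default.
  case s_j: (nth None s j) => [y|] //; case/negP: none_s.
  by apply/(has_nthP None); exists j; rewrite ?s_j.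
have [e [lt_e some_e none]] := IH count_s; exists e.+1; split => // -[|j] // ne_j.
exact: none.
Qed.

Lemma eqz_modP (N x y : int) : reflect (exists q, x = y + q * N) (x == y %[mod N])%Z.
Proof. by rewrite eqz_mod_dvd; apply: (iffP dvdzP) => -[q def_q]; exists q; lia. Qed.

Definition congr_subsum (N g d x : int) : Prop :=
  exists2 eta, eta \in [:: 0; g; d; g + d] & (x == eta %[mod N])%Z.

Lemma congr_subsum_eqmod N g d x y :
  (x == y %[mod N])%Z -> congr_subsum N g d x -> congr_subsum N g d y.
Proof.
move=> /eqz_modP [q def_x] [eta mem_eta /eqz_modP [q' def_x']]; exists eta => //.
by apply/eqz_modP; exists (q' - q); lia.
Qed.

Lemma congr_subsum_reflect N g d x : congr_subsum N g d x -> congr_subsum N g d (g + d - x).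
Proof.
case=> eta; rewrite !inE => /or4P [] /eqP -> /eqz_modP [q def_x];
  [exists (g + d) | exists d | exists g | exists 0]; rewrite ?inE ?eqxx ?orbT //;
  by apply/eqz_modP; exists (- q); lia.
Qed.

Lemma congr_subsum_opp N g d g' d' x :
  (g' == - g %[mod N])%Z -> (d' == - d %[mod N])%Z ->
  congr_subsum N g' d' x -> congr_subsum N g d (- x).
Proof.
move=> /eqz_modP [qg def_g'] /eqz_modP [qd def_d'] [eta]; rewrite !inE.
case/or4P=> /eqP -> /eqz_modP [q def_x];
  [exists 0 | exists g | exists d | exists (g + d)]; rewrite ?inE ?eqxx ?orbT //; apply/eqz_modP.
- by exists (- q); lia.
- by exists (- q - qg); lia.
- by exists (- q - qd); lia.
- by exists (- q - qg - qd); lia.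
Qed.

Section Residues.
Variables n l : nat.
Local Notation N := (n * l)%N%:Z.

Lemma cc_dd_decomp k : exists q, k = cc n k + n%:Z * (dd n l k - 1) + q * N.
Proof.
rewrite /cc /dd PoszM; have def_k := divz_eq (k - 1) n%:Z.
set q := ((k - 1) %/ n%:Z)%Z in def_k *; have def_q := divz_eq q l%:Z.
by exists (q %/ l%:Z)%Z; rewrite {1}def_q in def_k; lia.
Qed.

Lemma diff_congr_gamp_delp k1 k2 :
  (k2 - k1 == gamp n l k1 k2 + delp n l k1 k2 %[mod N])%Z.
Proof.
have [[q1 def_k1] [q2 def_k2]] := (cc_dd_decomp k1, cc_dd_decomp k2).
have -> : k2 - k1 = (q2 - q1) * N + (cc n k2 - cc n k1 + n%:Z * (dd n l k2 - dd n l k1)).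
  by rewrite {1}def_k1 {1}def_k2; lia.
by rewrite /gamp /delp modzDm modzMDl.
Qed.

Lemma gamp_swap k1 k2 : (gamp n l k2 k1 == - gamp n l k1 k2 %[mod N])%Z.
Proof. by rewrite /gamp modz_mod modzNm opprB. Qed.

Lemma delp_swap k1 k2 : (delp n l k2 k1 == - delp n l k1 k2 %[mod N])%Z.
Proof. by rewrite /delp modz_mod modzNm -mulrN opprB. Qed.

Lemma rule_eq1 k1 k2 : (rule n l k1 k2 == 1%N) = (gamp n l k1 k2 == 0) && (delp n l k1 k2 == 0).
Proof. by rewrite /rule; do 2!case: ifP. Qed.

Lemma rule_eq1C k1 k2 : (rule n l k2 k1 == 1%N) = (rule n l k1 k2 == 1%N).
Proof.
rewrite !rule_eq1 /gamp /delp !(sameP eqP dvdz_mod0P).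
by rewrite -[cc n k1 - _]opprB -[dd n l k1 - _]opprB mulrN !rpredN.
Qed.

Lemma rule_gens_sub k1 k2 : {subset rule_gens n l k1 k2 <=
  [:: gamp n l k1 k2; delp n l k1 k2; gamp n l k1 k2 + delp n l k1 k2]}.
Proof.
move=> g; rewrite /rule_gens; case: (rule n l k1 k2) => [|[|[|[|?]]]] //=;
  by rewrite !inE => /eqP ->; rewrite eqxx ?orbT.
Qed.

Hypotheses (n_gt0 : (0 < n)%N) (l_gt0 : (0 < l)%N).

Lemma shift_ok_congr k1 k2 eps : shift_ok n l k1 k2 eps -> eps != 0 ->
  [/\ 0 < eps, rule n l k1 k2 != 1%N & congr_subsum N (gamp n l k1 k2) (delp n l k1 k2) eps].
Proof.
have N_gt0 : 0 < N by rewrite ltz_nat muln_gt0 n_gt0 l_gt0.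
have [g0_ge0 d0_ge0] : 0 <= gamp n l k1 k2 /\ 0 <= delp n l k1 k2.
  by split; apply: modz_ge0; lia.
case=> [->|[rule_ne1 shift]]; rewrite ?eqxx // => eps_ne0.
have [g [mem_g g_ge0] [i def_eps]] : exists2 g, g \in [:: 0; gamp n l k1 k2; delp n l k1 k2;
    gamp n l k1 k2 + delp n l k1 k2] /\ 0 <= g & exists i : nat, eps = g + N * i%:Z.
  case: shift => [[i _ ->]|[g /rule_gens_sub mem_g [i ->]]]; first by exists 0 => //; exists i.
  exists g => //; last by exists i.
  by move: mem_g; rewrite !inE => /or3P [] /eqP ->; rewrite eqxx ?orbT; split => //; lia.
have : 0 <= N * i%:Z by apply: mulr_ge0; lia.
split; [lia | by apply/eqP | exists g => //].
by apply/eqz_modP; exists i%:Z; lia.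
Qed.

Lemma exchange_congr (bx by_ u v a eps : int) (h : nat) :
  u < v -> u = bx \/ u = by_ -> v = bx \/ v = by_ -> a = bx + h%:Z \/ a = by_ - h%:Z ->
  a = v - eps -> shift_ok n l u v eps -> eps != 0 ->
  (gamp n l bx by_, delp n l bx by_) != (0, 0) /\
  congr_subsum N (gamp n l bx by_) (delp n l bx by_) h%:Z.
Proof.
move=> lt_uv def_u def_v def_a def_eps shift eps_ne0.
have [eps_gt0 rule_ne1 subsum_eps] := shift_ok_congr shift eps_ne0.
have /eqz_modP [q diff] := diff_congr_gamp_delp bx by_.
have nonzero : rule n l bx by_ != 1%N -> (gamp n l bx by_, delp n l bx by_) != (0, 0).
  by rewrite rule_eq1 xpair_eqE.
case: def_u => ?; case: def_v => ?; subst u v; try lia.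
  split; first exact: nonzero rule_ne1.
  case: def_a => def_a; last by have -> : h%:Z = eps by lia.
  apply: congr_subsum_eqmod (congr_subsum_reflect subsum_eps).
  by apply/eqz_modP; exists (- q); lia.
split; first by apply: nonzero; rewrite -rule_eq1C.
have subsum_opp := congr_subsum_opp (gamp_swap _ _) (delp_swap _ _) subsum_eps.
case: def_a => def_a; first lia.
apply: congr_subsum_eqmod (congr_subsum_reflect subsum_opp).
by apply/eqz_modP; exists (- q); lia.
Qed.
End Residues.

Section GoodSequence.
Variables (n l : nat) (s : int) (lam mu : seq nat) (r : nat).
Variables (ks : seq (seq int)) (labs : seq (option nat)) (e : nat).
Hypotheses (good_ks : good n l s lam mu r ks labs) (labelled_e : only_some_at labs e).

Local Notation K := (nth [::] ks).
Local Notation bmu := (beta s mu r).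
Local Notation blam := (beta s lam r).

Lemma good_prefix : bullet_chain n l K 0 e.
Proof.
case: good_ks labelled_e => _ _ _ steps _ [lt_e _ bullet_other] j /andP [_ lt_j].
by rewrite /bullet_step -(bullet_other j); [apply: steps|]; lia.
Qed.

Lemma good_suffix : bullet_chain n l K e.+1 (size labs).
Proof.
case: good_ks labelled_e => _ _ _ steps _ [_ _ bullet_other] j /andP [lt_j le_j].
by rewrite /bullet_step -(bullet_other j); [apply: steps|]; lia.
Qed.

Lemma good_prefix_perm j : (j <= e)%N -> perm_eq (K j) (rev bmu).
Proof.
case: good_ks => _ start _ _ _ le_j; rewrite -start.
by apply: bullet_chain_perm good_prefix _.
Qed.

Lemma good_suffix_perm : perm_eq blam (K e.+1).
Proof.
case: good_ks labelled_e => _ _ stop _ _ [lt_e _ _]; rewrite -stop.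
by apply: bullet_chain_perm good_suffix _; rewrite lt_e leqnn.
Qed.

Hypothesis mu_part : is_partition mu.

Lemma good_prefix_uniq j : (j <= e)%N -> uniq (K j).
Proof. by move=> le_j; rewrite (perm_uniq (good_prefix_perm le_j)) rev_uniq beta_uniq. Qed.

Lemma good_labelled_step : exists i (a b : int), [/\ first_ascent (K e) i,
  K e.+1 = set_pair (K e) i a b, term n l (K e)`_i (K e)`_i.+1 a b &
  (a, b) != ((K e)`_i.+1, (K e)`_i)].
Proof.
case: good_ks labelled_e => _ _ _ steps _ [lt_e some_e _]; have := steps e lt_e.
case/stepP=> i [asc_i def_next t_i lab_e]; exists i, (K e.+1)`_i, (K e.+1)`_i.+1; split => //.
by move: some_e; rewrite lab_e xpair_eqE; case: ifP.
Qed.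

Hypothesis common : size [seq z <- blam | z \in bmu] = (r - 2)%N.

Lemma good_exchange i (a b : int) : first_ascent (K e) i -> K e.+1 = set_pair (K e) i a b ->
  exchanged bmu blam (K e)`_i (K e)`_i.+1 /\ exchanged blam bmu b a.
Proof.
move=> [lt_i _ _] def_next.
suff [? [? ? ? ? only]] : exchanged bmu blam (K e)`_i (K e)`_i.+1 /\ exchanged blam bmu a b.
  by split=> //; split=> // w w_in w_out; case: (only w w_in w_out); [right|left].
apply: (@perm_exchanged _ _ _ (take i (K e) ++ drop i.+2 (K e))); first exact: beta_uniq.
- apply: (@perm_trans _ (K e)); last by rewrite -{1}(set_pairK 0 lt_i) perm_set_pair.
  by rewrite perm_sym (perm_trans (good_prefix_perm _)) ?perm_rev.
- by apply: perm_trans good_suffix_perm _; rewrite def_next perm_set_pair.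
- by rewrite -size_filter common size_beta.
Qed.

Lemma good_exchange_congr (h : nat) (bx by_ : int) : (0 < n)%N -> (0 < l)%N ->
  (forall z, z \in blam =
    [|| (z \in bmu) && (z != bx) && (z != by_), z == bx + h%:Z | z == by_ - h%:Z]) ->
  (gamp n l bx by_, delp n l bx by_) != (0, 0) /\
  congr_subsum (n * l)%N%:Z (gamp n l bx by_) (delp n l bx by_) h%:Z.
Proof.
move=> n_gt0 l_gt0 mem_lam.
have [i [a [b [asc_i def_next [_ [eps [shift def_a def_b]]] labelled]]]] := good_labelled_step.
have [[u_mu v_mu u_lam v_lam _] [_ a_lam _ a_mu _]] := good_exchange asc_i def_next.
have out_lam w : w \in bmu -> w \notin blam -> w = bx \/ w = by_.
  move=> w_mu w_lam; move: (mem_lam w); rewrite (negbTE w_lam) w_mu /=.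
  by case/esym/negbT/norP=> /nandP [/negPn/eqP|/negPn/eqP] ? _; [left|right].
have in_lam w : w \in blam -> w \notin bmu -> w = bx + h%:Z \/ w = by_ - h%:Z.
  move=> w_lam w_mu; move: (mem_lam w); rewrite w_lam (negbTE w_mu) /=.
  by case/esym/orP=> /eqP; [left|right].
apply: (exchange_congr n_gt0 l_gt0 _ (out_lam _ u_mu u_lam) (out_lam _ v_mu v_lam)
  (in_lam _ a_lam a_mu) def_a shift).
  exact: first_ascent_lt (good_prefix_uniq (leqnn e)) asc_i.
by apply: contraNneq labelled => eps0; rewrite def_a def_b eps0 subr0 addr0.
Qed.

End GoodSequence.

Section TwoGoodSequences.
Variables (n l : nat) (s : int) (lam mu : seq nat) (r : nat).
Hypotheses (mu_part : is_partition mu)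
  (common : size [seq z <- beta s lam r | z \in beta s mu r] = (r - 2)%N).
Variables (ks ks' : seq (seq int)) (labs labs' : seq (option nat)) (e e' : nat).
Hypotheses (good_ks : good n l s lam mu r ks labs) (good_ks' : good n l s lam mu r ks' labs').
Hypotheses (labelled_e : only_some_at labs e) (labelled_e' : only_some_at labs' e').

Local Notation K := (nth [::] ks).
Local Notation K' := (nth [::] ks').

Lemma good_prefix_eq j : (j <= e)%N -> (j <= e')%N -> K j = K' j.
Proof.
have [[_ start _ _ _] [_ start' _ _ _]] := (good_ks, good_ks').
move=> le_j le_j'; apply: (bullet_chain_det _ (good_prefix good_ks labelled_e)
  (good_prefix good_ks' labelled_e')) => //.
by rewrite start start'.
Qed.

(* If [e < e'], the bullet step of the second sequence at [e] swaps the pair [u < v]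
   standing at the first ascent, and no later bullet step undoes this inversion; yet
   [u] directly precedes [v] when the second sequence performs its labelled step. *)
Lemma good_labelled_pos_le : (e' <= e)%N.
Proof.
rewrite leqNgt; apply/negP => lt_ee'.
have [i [a [b [asc_i def_next _ _]]]] := good_labelled_step good_ks labelled_e.
have [i' [a' [b' [asc_i' def_next' _ _]]]] := good_labelled_step good_ks' labelled_e'.
have [exch _] := good_exchange good_ks labelled_e mu_part common asc_i def_next.
have [exch' _] := good_exchange good_ks' labelled_e' mu_part common asc_i' def_next'.
have uniq_e := good_prefix_uniq good_ks labelled_e mu_part (leqnn e).
have uniq_e' := good_prefix_uniq good_ks' labelled_e' mu_part (leqnn e').
have [eq_u eq_v] :=
  exchanged_uniq exch exch' (first_ascent_lt uniq_e asc_i) (first_ascent_lt uniq_e' asc_i').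
have eq_e : K' e = K e by rewrite good_prefix_eq // ltnW.
set u := (K e)`_i in eq_u; set v := (K e)`_i.+1 in eq_v.
have step_e : bullet_step n l (K' e) (K' e.+1).
  by apply: (good_prefix good_ks' labelled_e'); rewrite lt_ee'.
have inv_e1 : (index v (K' e.+1) < index u (K' e.+1))%N.
  have [lt_i _ _] := asc_i; rewrite eq_e in step_e.
  rewrite !(index_bullet_step _ uniq_e step_e asc_i) /u /v.
  by rewrite !index_uniq ?eqxx ?(ltnW lt_i) // (gtn_eqF (ltnSn i)).
have chain := bullet_chain_sub (good_prefix good_ks' labelled_e') (leq0n e.+1) (leqnn e').
have inv_e' : (index v (K' e') < index u (K' e'))%N.
  apply: (bullet_chain_keeps_inversion _ chain (first_ascent_lt uniq_e asc_i) inv_e1).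
    exact: (good_prefix_uniq good_ks' labelled_e' mu_part lt_ee').
  by rewrite lt_ee' leqnn.
move: inv_e'; rewrite -eq_u -eq_v; case: asc_i' => lt_i' _ _.
by rewrite !index_uniq ?(ltnW lt_i') //; lia.
Qed.

Hypotheses (lam_part : is_partition lam) (same_pos : e' = e).

Lemma good_next_eq : K' e.+1 = K e.+1.
Proof.
have [i [a [b [asc_i def_next [lt_ba _] _]]]] := good_labelled_step good_ks labelled_e.
have [i' [a' [b' [asc_i' def_next' [lt_ba' _] _]]]] := good_labelled_step good_ks' labelled_e'.
have [_ exch] := good_exchange good_ks labelled_e mu_part common asc_i def_next.
have [_ exch'] := good_exchange good_ks' labelled_e' mu_part common asc_i' def_next'.
have [eq_b eq_a] := exchanged_uniq exch exch' lt_ba lt_ba'.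
have eq_e : K' e = K e by rewrite good_prefix_eq // same_pos.
move: asc_i' def_next'; rewrite same_pos eq_e eq_a eq_b => asc_i' ->.
by rewrite -(first_ascent_uniq asc_i asc_i') def_next.
Qed.

Lemma good_states_eq : size labs' = size labs /\ forall j, (j <= size labs)%N -> K' j = K j.
Proof.
have [[_ _ stop _ _] [_ _ stop' _ _]] := (good_ks, good_ks').
have [[lt_e _ _] [lt_e' _ _]] := (labelled_e, labelled_e').
have chain := good_suffix good_ks labelled_e.
have chain' := good_suffix good_ks' labelled_e'; rewrite same_pos in chain' lt_e'.
have size_eq : size labs' = size labs.
  apply: (bullet_chain_terminal_det good_next_eq chain' chain) => //.
    by move=> ll lab; rewrite stop'; apply: beta_no_step.
  by move=> ll lab; rewrite stop; apply: beta_no_step.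
split=> // j le_j; case: (leqP j e) => [le_je|lt_ej].
  by rewrite good_prefix_eq // same_pos.
by apply: (bullet_chain_det good_next_eq chain' chain); rewrite ?size_eq.
Qed.

End TwoGoodSequences.

Lemma good_uniq n l s lam mu r ks ks' labs labs' :
  is_partition lam -> is_partition mu ->
  size [seq z <- beta s lam r | z \in beta s mu r] = (r - 2)%N ->
  good n l s lam mu r ks labs -> good n l s lam mu r ks' labs' -> ks' = ks /\ labs' = labs.
Proof.
move=> lam_part mu_part common good_ks good_ks'.
have [[size_ks _ _ steps count1] [size_ks' _ _ steps' count1']] := (good_ks, good_ks').
have [[e labelled_e] [e' labelled_e']] := (count_isSome_eq1 count1, count_isSome_eq1 count1').
have same_pos : e' = e.
  apply/anti_leq.
  rewrite (good_labelled_pos_le mu_part common good_ks good_ks' labelled_e labelled_e').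
  by rewrite (good_labelled_pos_le mu_part common good_ks' good_ks labelled_e' labelled_e).
have [size_eq states_eq] :=
  good_states_eq mu_part common good_ks good_ks' labelled_e labelled_e' lam_part same_pos.
split; apply: (@eq_from_nth _ _) => [|j]; rewrite ?size_ks ?size_ks' ?size_eq //.
  by rewrite ltnS => le_j; apply: states_eq.
move=> lt_j; apply: step_label_det (steps _ lt_j); rewrite -!states_eq ?(ltnW lt_j) //.
by apply: steps'; rewrite size_eq.
Qed.

Theorem mainTheorem16 (n l m : nat) (sl : seq int) (mpl mpm : seq (seq nat))
    (lam mu : seq nat) (r : nat) (ks : seq (seq int)) (labs : seq (option nat)) :
  (1 <= n)%N -> (1 <= l)%N -> (1 <= m)%N -> size sl = l ->
  is_multipartition l m mpl -> is_multipartition l m mpm ->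
  is_partition lam -> is_partition mu ->
  corr n l sl mpl lam -> corr n l sl mpm mu ->
  sdom lam mu ->
  sumn lam = r -> sumn mu = r ->
  size [seq z <- beta (charge_sum sl) lam r | z \in beta (charge_sum sl) mu r] = (r - 2)%N ->
  good n l (charge_sum sl) lam mu r ks labs ->
  (forall ks' labs', good n l (charge_sum sl) lam mu r ks' labs' -> ks' = ks /\ labs' = labs) /\
  (let h : nat := (sumn lam - sumn (pmeet lam mu))%N in
   let bmu := beta (charge_sum sl) mu r in
   forall x y : nat, (1 <= x <= r)%N -> (1 <= y <= r)%N -> x != y ->
   (forall z, z \in beta (charge_sum sl) lam r =
      [|| (z \in bmu) && (z != nth 0 bmu x.-1) && (z != nth 0 bmu y.-1),
          z == nth 0 bmu x.-1 + h%:Z | z == nth 0 bmu y.-1 - h%:Z]) ->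
   let bx := nth 0 bmu x.-1 in let by_ := nth 0 bmu y.-1 in
   let gam := ((cc n by_ - cc n bx) %% (n * l)%N%:Z)%Z in
   let del := ((n%:Z * (dd n l by_ - dd n l bx)) %% (n * l)%N%:Z)%Z in
   (gam, del) != (0, 0) /\
   exists2 eta, eta \in [:: 0; gam; del; gam + del] & (h%:Z == eta %[mod (n * l)%N%:Z])%Z).
Proof.
move=> n_gt0 l_gt0 _ _ _ _ lam_part mu_part _ _ _ _ _ common good_ks.
split=> [ks' labs' good_ks' | h bmu x y _ _ _ mem_lam].
  exact: good_uniq lam_part mu_part common good_ks good_ks'.
have [_ _ _ _ /count_isSome_eq1 [e labelled_e]] := good_ks.
exact: good_exchange_congr good_ks labelled_e mu_part common h _ _ n_gt0 l_gt0 mem_lam.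
Qed.
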